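(* Let $\Sigma$ be a finite simplicial complex, let $d\ge0$, and assume $\deg\tau>0$ for all $\tau\in\Sigma_d$. Then $d+2$ is an eigenvalue of the normalized up-Laplacian $\Delta^{up}_d$ if and only if the signed graph $(\Gamma_d,\tilde s)$ has an antibalanced connected component. Moreover, the multiplicity of the eigenvalue $d+2$ equals the number of antibalanced connected components of $(\Gamma_d,\tilde s)$.
   Context: $\Sigma_d$ consists of the $d$-simplices of $\Sigma$ with fixed orientations. $\mathrm{sgn}([\tau],\partial[\sigma])\in\{\pm1\}$ is the coefficient of $[\tau]$ in the simplicial boundary $\partial[\sigma]$ of the oriented $(d+1)$-simplex $\sigma\supset\tau$. $\deg\tau$ is the number of $(d+1)$-simplices containing $\tau$. $\Delta^{up}_d=D^{-1}B_{d+1}B_{d+1}^\top$, where $B_{d+1}$ is the signed $\Sigma_d\times\Sigma_{d+1}$ incidence matrix and $D=\mathrm{diag}(\deg\tau)$; all its eigenvalues lie in $[0,d+2]$. $\Gamma_d$ is the graph on $\Sigma_d$ in which distinct $\tau,\tau'$ are adjacent iff both are facets of some (necessarily unique) $\sigma\in\Sigma_{d+1}$. The sign is $\tilde s(\tau,\tau')=-\mathrm{sgn}([\tau],\partial[\sigma])\,\mathrm{sgn}([\tau'],\partial[\sigma])$. Switching at a vertex means multiplying the signs of all edges at that vertex by $-1$. A signed graph (or a connected component of one) is balanced if after some switchings all edge signs are $+1$, and antibalanced if after some switchings all edge signs are $-1$. *)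

From HB Require Import structures.
From mathcomp Require Import all_boot all_order all_algebra.
Unset Implicit Arguments. Unset Strict Implicit. Unset Printing Implicit Defensive.
Import Order.TTheory GRing.Theory Num.Theory.
Local Open Scope ring_scope.

Definition simplicial_complex (n : nat) (K : {set {set 'I_n}}) : Prop :=
  set0 \notin K /\
  (forall s t : {set 'I_n}, s \in K -> t \subset s -> t != set0 -> t \in K).

Definition Sd (n : nat) (K : {set {set 'I_n}}) (d : nat) : {set {set 'I_n}} :=
  [set s in K | #|s| == d.+1]%N.

Definition simp (n : nat) (K : {set {set 'I_n}}) (d : nat) :=
  {s : {set 'I_n} | s \in Sd n K d}.
HB.instance Definition _ (n : nat) (K : {set {set 'I_n}}) (d : nat) :=
  Finite.on (simp n K d).

Definition deg (n : nat) (K : {set {set 'I_n}}) (d : nat) (t : {set 'I_n}) : nat :=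
  #|[set s in Sd n K d.+1 | t \subset s]|.

(* Orientations: each simplex s carries the orientation given by the increasing
   order of its vertices, reversed iff eps s = true (arbitrary fixed choice).
   For tau a facet of sigma with sigma \ tau = {v}, the coefficient of [tau]
   in the boundary of [sigma] is
     (-1)^(eps tau + eps sigma + #{u in sigma | u < v}).
   The sum below has exactly one term (the removed vertex v). *)
Definition sgn (n : nat) (eps : {set 'I_n} -> bool) (t s : {set 'I_n}) : int :=
  (-1) ^+ (eps t + eps s
            + \sum_(v in s :\: t) #|[set u in s | (u < v)%N]|)%N.

Definition incid (R : nzRingType) (n : nat) (K : {set {set 'I_n}})
    (eps : {set 'I_n} -> bool) (d : nat) : 'M[R]_(#|{: simp n K d}|, #|{: simp n K d.+1}|) :=
  \matrix_(i, j)
    (let t := val (enum_val i : simp n K d) in let s := val (enum_val j : simp n K d.+1) in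
     if t \subset s then (sgn n eps t s)%:~R else 0).

Definition degmx (R : nzRingType) (n : nat) (K : {set {set 'I_n}}) (d : nat)
  : 'M[R]_(#|{: simp n K d}|) :=
  diag_mx (\row_i (deg n K d (val (enum_val i : simp n K d)))%:R).

Definition upLap (R : fieldType) (n : nat) (K : {set {set 'I_n}})
    (eps : {set 'I_n} -> bool) (d : nat) : 'M[R]_(#|{: simp n K d}|) :=
  invmx (degmx R n K d) *m incid R n K eps d *m (incid R n K eps d)^T.

Definition adjG (n : nat) (K : {set {set 'I_n}}) (d : nat) : rel (simp n K d) :=
  fun x y => (x != y) &&
    [exists s : simp n K d.+1, (val x \subset val s) && (val y \subset val s)].

(* The sign tilde s(tau,tau') = - sgn(tau, sigma) sgn(tau', sigma), where sigma is the
   unique (d+1)-simplex containing both, i.e. sigma = tau :|: tau'. *)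
Definition sgnG (n : nat) (K : {set {set 'I_n}}) (eps : {set 'I_n} -> bool)
    (d : nat) (x y : simp n K d) : int :=
  - (sgn n eps (val x) (val x :|: val y) * sgn n eps (val y) (val x :|: val y)).

Definition components (n : nat) (K : {set {set 'I_n}}) (d : nat)
  : {set {set simp n K d}} :=
  [set [set y | connect (adjG n K d) x y] | x : simp n K d].

(* A component C is antibalanced if after switching at some set of vertices
   (f x = true means "switch at x") every edge inside C has sign -1.
   Stated as a boolean (finite quantification over switching functions). *)
Definition antibalanced (n : nat) (K : {set {set 'I_n}}) (eps : {set 'I_n} -> bool)
    (d : nat) (C : {set simp n K d}) : bool :=
  [exists f : {ffun simp n K d -> bool},
    [forall x, forall y, ((x \in C) && (y \in C) && adjG n K d x y) ==>
      ((-1) ^+ f x * sgnG n K eps d x y * (-1) ^+ f y == -1)]].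

Definition n_antibalanced (n : nat) (K : {set {set 'I_n}}) (eps : {set 'I_n} -> bool)
    (d : nat) : nat :=
  #|[set C in components n K d | antibalanced n K eps d C]|.

From HB Require Import structures.
From mathcomp Require Import all_boot all_order all_algebra.
From mathcomp Require Import ring lra.
Set Implicit Arguments. Unset Strict Implicit. Unset Printing Implicit Defensive.
Import Order.TTheory GRing.Theory Num.Theory.
Local Open Scope ring_scope.

(* Write M = D^-1 B B^T and lam = d+2.  The proof has three layers.
   1. Linear algebra: if M has no Jordan chain of length 2 at a scalar a, the
      multiplicity of a in char_poly M is the dimension of the eigenspace
      (conjugate M to a block-triangular form with a scalar block on a basis
      of the eigenspace).  A matrix D^-1 A with D positive diagonal and A
      symmetric has this property, being self-adjoint for the D-inner product.
   2. Eigenvectors: v M = lam v iff the cochain u = v D^-1 is facet-constant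
      (the signed values bsign(t,s) u(t) agree on the d+2 facets t of every
      (d+1)-simplex s); one direction is a count, the other is the equality
      case of Cauchy-Schwarz summed over all s.  Facet-constancy is the same as
      u(y) = -s~(x,y) u(x) along every edge of Gamma_d.
   3. Signed graphs: such cochains vanish on the components that are not
      antibalanced and are determined by one value on each antibalanced one,
      so the eigenspace has dimension the number of antibalanced components. *)

Section AlgebraicMultiplicity.
Variable F : fieldType.

Lemma char_poly_conj n (P M : 'M[F]_n) : P \in unitmx ->
  char_poly (P *m M *m invmx P) = char_poly M.
Proof.
move=> Pu; rewrite /char_poly /char_poly_mx.
have PPi : map_mx polyC P *m map_mx polyC (invmx P) = 1%:M.
  by rewrite -map_mxM mulmxV // map_mx1.
have -> : 'X%:M - map_mx polyC (P *m M *m invmx P) =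
   map_mx polyC P *m ('X%:M - map_mx polyC M) *m map_mx polyC (invmx P).
  by rewrite !map_mxM mulmxBr mulmxBl mul_mx_scalar -scalemxAl PPi scalemx1.
rewrite !det_mulmx mulrC mulrA -det_mulmx.
by rewrite -map_mxM mulVmx // map_mx1 det1 mul1r.
Qed.

Definition semisimple_at n (M : 'M[F]_n) (a : F) : Prop :=
  forall v : 'rV_n, v *m (M - a%:M) *m (M - a%:M) = 0 -> v *m (M - a%:M) = 0.

Lemma char_poly_scalar_lblock r m a (C : 'M[F]_(m, r)) (Y : 'M_m) :
  char_poly (block_mx (a%:M : 'M_r) 0 C Y) = ('X - a%:P) ^+ r * char_poly Y.
Proof.
rewrite /char_poly /char_poly_mx map_block_mx /= map_mx0 (scalar_mx_block r m 'X).
rewrite opp_block_mx add_block_mx oppr0 addr0 det_lblock map_scalar_mx /=.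
by rewrite -raddfB det_scalar.
Qed.

Section EigenBasis.
Variables (r m : nat) (M : 'M[F]_(r + m)) (a : F) (P : 'M[F]_(r + m)).
Hypotheses (Pu : P \in unitmx) (topP : (usubmx P :=: eigenspace M a)%MS).

Let Q := P *m M *m invmx P.

Lemma conj_eigen_block : Q = block_mx a%:M 0 (dlsubmx Q) (drsubmx Q).
Proof.
have top : usubmx P *m M = a *: usubmx P by apply/eigenspaceP; rewrite topP.
have uQ : usubmx Q = row_mx (a%:M) 0.
  rewrite /Q -!mul_usub_mx top -scalemxAl mul_usub_mx mulmxV //.
  by rewrite (scalar_mx_block r m 1) /block_mx col_mxKu scale_row_mx scaler0 scalemx1.
by rewrite -{1}[Q]submxK /ulsubmx /ursubmx uQ row_mxKl row_mxKr.
Qed.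

(* If [M] is semisimple at [a], the complementary block no longer has [a]
   as an eigenvalue: an eigenvector of it would give a Jordan chain of [M]. *)
Lemma conj_eigen_block_root : semisimple_at M a ->
  ~~ root (char_poly (drsubmx Q)) a.
Proof.
move=> ssM; rewrite -eigenvalue_root_char; apply/negP => /eigenvalueP [w wY wn0].
set z := row_mx (0 : 'rV_r) w.
have QaB : Q - a%:M = block_mx 0 0 (dlsubmx Q) (drsubmx Q - a%:M).
  rewrite {1}conj_eigen_block (scalar_mx_block r m a) opp_block_mx add_block_mx.
  by congr block_mx; rewrite ?subrr ?oppr0 ?addr0.
have zQ : z *m (Q - a%:M) = row_mx (w *m dlsubmx Q) 0.
  by rewrite QaB mul_row_block !mul0mx !add0r mulmxBr wY mul_mx_scalar subrr.
have zQ2 : z *m (Q - a%:M) *m (Q - a%:M) = 0.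
  by rewrite zQ QaB mul_row_block !mulmx0 !mul0mx !addr0 row_mx0.
have QP : (Q - a%:M) *m P = P *m (M - a%:M).
  by rewrite mulmxBl mulmxBr /Q mulmxKV // scalar_mxC.
have zP_eigen : (z *m P <= eigenspace M a)%MS.
  apply/sub_kermxP; apply: ssM.
  by rewrite -(mulmxA z P) -QP mulmxA -(mulmxA _ P) -QP mulmxA zQ2 mul0mx.
move: zP_eigen; rewrite -topP => /submxP [u zPu].
have : z *m P = row_mx u 0 *m P by rewrite zPu -{2}(vsubmxK P) mul_row_col mul0mx addr0.
have Pf : row_free P by rewrite row_free_unit.
move/(row_free_inj Pf)/eq_row_mx => [_ w0].
by move: wn0; rewrite w0 eqxx.
Qed.

End EigenBasis.

Lemma usub_row_ebase r m (U : 'M[F]_(r, r + m)) : row_free U ->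
  (usubmx (row_ebase U) :=: U)%MS.
Proof.
move=> /eqP rU; set P := row_ebase U.
have UP : U = col_ebase U *m usubmx P.
  rewrite -{1}(mulmx_ebase U) rU pid_mx_row -/P -{1}(vsubmxK P).
  by rewrite -mulmxA mul_row_col mul1mx mul0mx addr0.
have cf : row_full (col_ebase U) by rewrite row_full_unit col_ebase_unit.
by rewrite {1}UP; apply: eqmx_sym; apply: eqmxMfull.
Qed.

Lemma mup_eigen_basis r m (M : 'M[F]_(r + m)) (U : 'M_(r, r + m)) a :
  semisimple_at M a -> row_free U -> (U :=: eigenspace M a)%MS ->
  mup a (char_poly M) = r.
Proof.
move=> ssM Uf UE; set P := row_ebase U.
have Pu : P \in unitmx by apply: row_ebase_unit.
have topP : (usubmx P :=: eigenspace M a)%MS.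
  by apply: eqmx_trans UE; apply: usub_row_ebase.
rewrite -(char_poly_conj M Pu) (conj_eigen_block Pu topP) char_poly_scalar_lblock.
rewrite mupM ?mup_XsubCX ?eqxx ?mupNroot ?addn0 ?conj_eigen_block_root //.
  by rewrite expf_neq0 // polyXsubC_eq0.
by rewrite monic_neq0 // char_poly_monic.
Qed.

Lemma mup_char_poly_eigenspace n (M : 'M[F]_n) a : semisimple_at M a ->
  mup a (char_poly M) = \rank (eigenspace M a).
Proof.
move=> ssM; have rEn := subnKC (rank_leq_col (eigenspace M a)).
suff gen : forall r m N (e : (r + m)%N = N) (M' : 'M[F]_N) (U : 'M_(r, N)),
    semisimple_at M' a -> row_free U -> (U :=: eigenspace M' a)%MS ->
    mup a (char_poly M') = r.
  exact: (gen _ _ _ rEn M (row_base _) ssM (row_base_free _) (eq_row_base _)).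
by move=> r m N e; case: N / e => M' U; apply: mup_eigen_basis.
Qed.

End AlgebraicMultiplicity.

Section SymmetricScaling.
Variable R : realFieldType.

Section PositiveDiagonal.
Variables (n : nat) (dv : 'rV[R]_n).
Hypothesis dv_pos : forall i, 0 < dv 0 i.

Lemma mul_diag_inv_pos : diag_mx (\row_i (dv 0 i)^-1) *m diag_mx dv = 1%:M.
Proof.
apply/matrixP => i j; rewrite mul_diag_mx !mxE.
by case: eqP => [->|_]; rewrite ?mulr0 ?mulr1n ?mulVf ?gt_eqF.
Qed.

Lemma unitmx_diag_pos : diag_mx dv \in unitmx.
Proof. by have [] := mulmx1_unit mul_diag_inv_pos. Qed.

Lemma invmx_diag_pos : invmx (diag_mx dv) = diag_mx (\row_i (dv 0 i)^-1).
Proof.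
rewrite -[RHS]mulmx1 -(mulmxV unitmx_diag_pos) mulmxA mul_diag_inv_pos.
by rewrite mul1mx.
Qed.

End PositiveDiagonal.

(* A matrix [D^-1 A] with [D] positive diagonal and [A] symmetric is
   self-adjoint for the inner product given by [D], hence semisimple at every
   scalar: if [y = v (M - l)] satisfies [y (M - l) = 0] then
   [y D^-1 y^T = 0], which forces [y = 0]. *)
Lemma semisimple_diag_sym n (A : 'M[R]_n) (dv : 'rV[R]_n) (l : R) :
  A^T = A -> (forall i, 0 < dv 0 i) ->
  semisimple_at (invmx (diag_mx dv) *m A) l.
Proof.
move=> sA pos v; have DiD := mul_diag_inv_pos pos; rewrite invmx_diag_pos //.
set Di := diag_mx _; set L := A - l *: diag_mx dv.
have MlE : forall w : 'rV_n, w *m (Di *m A - l%:M) = (w *m Di) *m L.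
  move=> w; rewrite /L !mulmxBr mulmxA mul_mx_scalar -scalemxAr.
  by rewrite -[w *m Di *m diag_mx dv]mulmxA DiD mulmx1.
have sL : L^T = L by rewrite /L linearB /= linearZ /= tr_diag_mx sA.
set y := v *m _ => yL0.
have yy : y *m Di *m y^T = 0 by rewrite {2}/y MlE trmx_mul sL mulmxA -MlE yL0 mul0mx.
apply/rowP => i; rewrite [RHS]mxE.
have := congr1 (fun m : 'M[R]_1 => m 0 0) yy; rewrite /= !mxE.
rewrite (eq_bigr (fun j => y 0 j ^+ 2 / dv 0 j)); last first.
  by move=> j _; rewrite mul_mx_diag !mxE; ring.
have term_ge0 j : 0 <= y 0 j ^+ 2 / dv 0 j by rewrite divr_ge0 ?sqr_ge0 ?ltW.
move=> /(psumr_eq0P (fun j _ => term_ge0 j)) /(_ i isT) /eqP.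
by rewrite mulf_eq0 invr_eq0 (gt_eqF (pos i)) orbF sqrf_eq0 /y mxE => /eqP.
Qed.

End SymmetricScaling.

Section Complex.
Variables (n d : nat) (K : {set {set 'I_n}}).
Hypothesis hK : simplicial_complex n K.

Local Notation T0 := (simp n K d).
Local Notation T1 := (simp n K d.+1).
Local Notation adj := (adjG n K d).

Lemma card_T0 (t : T0) : #|val t| = d.+1.
Proof. by have := valP t; rewrite inE => /andP [_ /eqP]. Qed.

Lemma card_T1 (s : T1) : #|val s| = d.+2.
Proof. by have := valP s; rewrite inE => /andP [_ /eqP]. Qed.

Lemma card_facets (s : T1) : #|[pred t : T0 | val t \subset val s]| = d.+2.
Proof.
have sK : val s \in K by have := valP s; rewrite inE => /andP [].
rewrite -[LHS](card_image val_inj) -[d.+2]binSn -(card_T1 s) -cards_draws.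
apply: eq_card => A; rewrite inE.
apply/imageP/andP => [[t ts ->]|[As /eqP cA]]; first by rewrite card_T0.
have AS : A \in Sd n K d.
  rewrite inE cA eqxx andbT; apply: (proj2 hK _ _ sK As).
  by apply/eqP => A0; move: cA; rewrite A0 cards0.
by exists (exist _ A AS).
Qed.

Lemma deg_cofaces (t : T0) : deg n K d (val t) = #|[pred s : T1 | val t \subset val s]|.
Proof.
rewrite /deg -[RHS](card_image val_inj); apply: eq_card => A; rewrite inE.
apply/andP/imageP => [[AS tA]|[s ts ->]]; first by exists (exist _ A AS).
by split; first exact: valP.
Qed.

Lemma union_facets (t t' : T0) (s : T1) : t != t' ->
  val t \subset val s -> val t' \subset val s -> val t :|: val t' = val s.
Proof.
move=> ntt ts t's; apply/eqP; rewrite eqEcard subUset ts t's /= card_T1.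
have : val t \proper val t :|: val t'.
  rewrite properEneq subsetUl andbT; apply: contra ntt => /eqP tU.
  have t't : val t' \subset val t by rewrite tU subsetUr.
  by apply/eqP/val_inj/esym/eqP; rewrite eqEcard t't !card_T0 leqnn.
by move/proper_card; rewrite card_T0.
Qed.

Lemma adj_sym : symmetric adj.
Proof.
move=> x y; rewrite /adjG eq_sym; congr (_ && _).
by apply/existsP/existsP => -[s /andP [xs ys]]; exists s; rewrite xs ys.
Qed.

Definition comp_of (t : T0) : {set T0} := [set y | connect adj t y].

Lemma comp_of_self t : t \in comp_of t.
Proof. by rewrite inE connect0. Qed.

Lemma comp_of_mem t : comp_of t \in components n K d.
Proof. by apply/imsetP; exists t. Qed.

Lemma componentE C t : C \in components n K d -> t \in C -> C = comp_of t.
Proof.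
case/imsetP => x _ ->; rewrite inE => xt; apply/setP => y; rewrite !inE.
apply/idP/idP => [xy | ty]; last exact: connect_trans xt ty.
by apply: connect_trans xy; rewrite (sym_connect_sym adj_sym) in xt.
Qed.

Lemma component_adj C x y : C \in components n K d -> x \in C -> adj x y -> y \in C.
Proof. by move=> hC xC xy; rewrite (componentE hC xC) inE; apply: connect1. Qed.

Lemma connect_invariant (T : Type) (w : T0 -> T) (a : T0) :
  (forall x y, connect adj a x -> adj x y -> w y = w x) ->
  forall y, connect adj a y -> w y = w a.
Proof.
move=> H y /connectP [p pp ->].
suff: forall x, connect adj a x -> path adj x p -> w (last x p) = w x.
  by move/(_ a (connect0 _ a) pp).
elim: p {pp} => [|z p IH] x cx //= /andP [xz pz].
by rewrite IH ?(H x z cx xz) //; apply: connect_trans cx (connect1 xz).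
Qed.

End Complex.

Lemma lagrange_identity (R : comNzRingType) (T : finType) (P : pred T) (a : T -> R) :
  \sum_(t | P t) \sum_(t' | P t') (a t - a t') ^+ 2 =
  2%:R * (#|P|%:R * \sum_(t | P t) a t ^+ 2 - (\sum_(t | P t) a t) ^+ 2).
Proof.
set S := \sum_(t | P t) a t; set S2 := \sum_(t | P t) a t ^+ 2.
have inner t : \sum_(t' | P t') (a t - a t') ^+ 2 =
    #|P|%:R * a t ^+ 2 - 2%:R * a t * S + S2.
  rewrite (eq_bigr (fun t' => a t ^+ 2 + (- (2%:R * a t * a t') + a t' ^+ 2))).
    rewrite big_split big_split /= sumr_const sumrN -mulr_sumr -/S -/S2 -mulr_natl; ring.
  by move=> t' _; ring.
rewrite (eq_bigr _ (fun t _ => inner t)) big_split big_split /= sumrN sumr_const.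
rewrite -mulr_suml -mulr_sumr -/S -/S2 -mulr_sumr -/S2 mulr_natl; ring.
Qed.

Section CauchySchwarz.
Variables (R : realFieldType) (T : finType) (P : pred T) (a : T -> R).

Lemma cauchy_schwarz_gap_ge0 :
  0 <= #|P|%:R * \sum_(t | P t) a t ^+ 2 - (\sum_(t | P t) a t) ^+ 2.
Proof.
rewrite -(@pmulr_rge0 _ 2%:R) // -lagrange_identity.
by apply: sumr_ge0 => t _; apply: sumr_ge0 => t' _; apply: sqr_ge0.
Qed.

Lemma cauchy_schwarz_gap_eq0 :
  #|P|%:R * \sum_(t | P t) a t ^+ 2 = (\sum_(t | P t) a t) ^+ 2 ->
  {in P &, forall t t', a t = a t'}.
Proof.
move=> /eqP; rewrite -subr_eq0 => /eqP gap0 t t' Pt Pt'.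
have : \sum_(t | P t) \sum_(t' | P t') (a t - a t') ^+ 2 = 0.
  by rewrite lagrange_identity gap0 mulr0.
have sq_ge0 t1 t2 : 0 <= (a t1 - a t2) ^+ 2 by apply: sqr_ge0.
have row_ge0 t1 : 0 <= \sum_(t2 | P t2) (a t1 - a t2) ^+ 2.
  by apply: sumr_ge0 => t2 _.
move=> /(psumr_eq0P (fun t1 _ => row_ge0 t1)) /(_ t Pt).
move=> /(psumr_eq0P (fun t2 _ => sq_ge0 t t2)) /(_ t' Pt') /eqP.
by rewrite sqrf_eq0 subr_eq0 => /eqP.
Qed.

End CauchySchwarz.

Definition swsign {R : nzRingType} (b : bool) : R := (-1) ^+ b.

Lemma swsign_sqr {R : nzRingType} b : swsign b * swsign b = 1 :> R.
Proof. by rewrite /swsign -exprD addnn -mul2n exprM sqrrN !expr1n. Qed.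

(* For signs [a] and [e], the relation [a * e * b = -1] determines [b]: this
   turns a negated edge into a propagation rule for switching signs. *)
Lemma swsign_edge {R : comNzRingType} (a b e : R) :
  a * e * b = -1 -> a * a = 1 -> e * e = 1 -> b = - e * a.
Proof.
move=> H a2 e2; transitivity (b * ((a * a) * (e * e))); first by rewrite a2 e2 !mulr1.
by transitivity ((a * e * b) * (e * a)); [ring | rewrite H mulN1r mulNr].
Qed.

Section UpLaplacian.
Variables (R : realFieldType) (n d : nat) (K : {set {set 'I_n}}).
Variable eps : {set 'I_n} -> bool.
Hypothesis hK : simplicial_complex n K.

Local Notation T0 := (simp n K d).
Local Notation T1 := (simp n K d.+1).
Local Notation adj := (adjG n K d).
Local Notation B := (incid R n K eps d).
Local Notation D := (degmx R n K d).
Local Notation N0 := #|{: T0}|.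

(* The candidate eigenvalue [d + 2], the number of facets of a (d+1)-simplex. *)
Let lam : R := (d.+2)%:R.

Definition bsign (t : T0) (S : {set 'I_n}) : R := (sgn n eps (val t) S)%:~R.

Lemma bsign_sqr t S : bsign t S * bsign t S = 1.
Proof.
by rewrite /bsign /sgn -rmorphM /= -exprD addnn -mul2n exprM sqrrN !expr1n.
Qed.

Definition inc (t : T0) (s : T1) : R :=
  if val t \subset val s then bsign t (val s) else 0.

Definition cochain (x : 'rV[R]_N0) (t : T0) : R := x 0 (enum_rank t).

Lemma cochainE (x : 'rV[R]_N0) i : x 0 i = cochain x (enum_val i).
Proof. by rewrite /cochain enum_valK. Qed.

Definition cobound (u : T0 -> R) (s : T1) : R := \sum_t u t * inc t s.

Definition gen_eigen_eq (u : T0 -> R) : Prop :=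
  forall t : T0, \sum_s cobound u s * inc t s = lam * (u t * (deg n K d (val t))%:R).

Lemma gen_eigen_cochainE (x : 'rV[R]_N0) :
  x *m (B *m B^T) = lam *: (x *m D) <-> gen_eigen_eq (cochain x).
Proof.
have sum_enum (T : finType) (F : T -> R) :
    \sum_t F t = \sum_(i < #|{: T}|) F (enum_val i) by rewrite -(big_enum_val F).
have lhsE k : (x *m (B *m B^T)) 0 k =
    \sum_s cobound (cochain x) s * inc (enum_val k) s.
  rewrite mulmxA mxE [RHS]sum_enum; apply: eq_bigr => j _.
  rewrite /cobound [X in _ = X * _]sum_enum !mxE; congr (_ * _).
  by apply: eq_bigr => i _; rewrite !mxE cochainE.
have rhsE k : (lam *: (x *m D)) 0 k =
    lam * (cochain x (enum_val k) * (deg n K d (val (enum_val k)))%:R).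
  by rewrite mxE mul_mx_diag !mxE cochainE.
split=> [xE t | tE].
  have := congr1 (fun y : 'rV_N0 => y 0 (enum_rank t)) xE.
  by rewrite /= lhsE rhsE enum_rankK.
by apply/rowP => k; rewrite lhsE rhsE tE.
Qed.

Definition facet_constant (u : T0 -> R) : Prop :=
  forall (s : T1) (t t' : T0), val t \subset val s -> val t' \subset val s ->
  bsign t (val s) * u t = bsign t' (val s) * u t'.

Lemma sum_if_const (T : finType) (P : pred T) (c : R) :
  \sum_t (if P t then c else 0) = #|P|%:R * c.
Proof. by rewrite -big_mkcond sumr_const mulr_natl. Qed.

(* A facet-constant cochain solves the eigen-equation: its coboundary on [s]
   is [lam] times the common value, and [t] has [deg t] cofaces. *)
Lemma facet_constant_gen_eigen u : facet_constant u -> gen_eigen_eq u.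
Proof.
move=> fc t; rewrite deg_cofaces.
rewrite (eq_bigr (fun s : T1 => if val t \subset val s then lam * u t else 0)).
  by rewrite sum_if_const; ring.
move=> s _; rewrite {1}/inc; case: ifP => ts; last by rewrite mulr0.
rewrite /cobound (eq_bigr (fun t' : T0 =>
  if val t' \subset val s then bsign t (val s) * u t else 0)).
  by rewrite sum_if_const card_facets // -mulrA mulrAC bsign_sqr mul1r.
move=> t' _; rewrite /inc; case: ifP => t's; last by rewrite mulr0.
by rewrite mulrC (fc s t' t t's ts).
Qed.

Lemma inc_sqr t s : inc t s ^+ 2 = if val t \subset val s then 1 else 0.
Proof. by rewrite /inc; case: ifP => _; rewrite ?expr0n // expr2 bsign_sqr. Qed.

Lemma sum_inc_sqr u :
  \sum_s \sum_t (inc t s * u t) ^+ 2 = \sum_t u t ^+ 2 * (deg n K d (val t))%:R.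
Proof.
rewrite exchange_big /=; apply: eq_bigr => t _.
rewrite (eq_bigr (fun s : T1 => u t ^+ 2 * (if val t \subset val s then 1 else 0))).
  by rewrite -mulr_sumr sum_if_const deg_cofaces mulr1.
by move=> s _; rewrite exprMn inc_sqr mulrC.
Qed.

(* Pairing the eigen-equation with [u] itself computes the squared norm of the
   coboundary. *)
Lemma sum_cobound_sqr u : gen_eigen_eq u ->
  \sum_s cobound u s ^+ 2 = lam * \sum_t u t ^+ 2 * (deg n K d (val t))%:R.
Proof.
move=> eq_u; transitivity (\sum_t u t * (lam * (u t * (deg n K d (val t))%:R))).
  rewrite (eq_bigr (fun s : T1 => \sum_t u t * inc t s * cobound u s)); last first.
    by move=> s _; rewrite expr2 {1}/cobound mulr_suml.
  rewrite exchange_big /=; apply: eq_bigr => t _.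
  by rewrite -eq_u mulr_sumr; apply: eq_bigr => s _; ring.
by rewrite mulr_sumr; apply: eq_bigr => t _; ring.
Qed.

(* Conversely, a solution of the eigen-equation is facet-constant: on each
   (d+1)-simplex [s], the Cauchy-Schwarz inequality
   [cobound u s ^2 <= (d + 2) * sum_(t in s) (inc t s * u t)^2]
   holds, and the two previous lemmas say that these inequalities add up to an
   equality; hence each is an equality, forcing [inc t s * u t] constant. *)
Lemma gen_eigen_facet_constant u : gen_eigen_eq u -> facet_constant u.
Proof.
move=> eq_u; set a := fun (s : T1) (t : T0) => inc t s * u t.
have facet_sum (s : T1) : \sum_(t : T0 | val t \subset val s) a s t = cobound u s.
  rewrite /cobound big_mkcond /=; apply: eq_bigr => t _.
  by rewrite /a mulrC; case: ifP => ts //; rewrite /inc ts mulr0.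
have facet_sqr (s : T1) :
    \sum_(t : T0 | val t \subset val s) a s t ^+ 2 = \sum_t a s t ^+ 2.
  rewrite big_mkcond /=; apply: eq_bigr => t _.
  by case: ifP => ts //; rewrite /a /inc ts mul0r expr0n.
set gap := fun s : T1 =>
  #|[pred t : T0 | val t \subset val s]|%:R *
    \sum_(t : T0 | val t \subset val s) a s t ^+ 2 -
  (\sum_(t : T0 | val t \subset val s) a s t) ^+ 2.
have gap_ge0 (s : T1) : 0 <= gap s by apply: cauchy_schwarz_gap_ge0.
have gaps0 : \sum_s gap s = 0.
  rewrite /gap (eq_bigr (fun s => lam * \sum_t a s t ^+ 2 - cobound u s ^+ 2)).
    by rewrite sumrB -mulr_sumr sum_inc_sqr sum_cobound_sqr // subrr.
  by move=> s _; rewrite card_facets // facet_sum facet_sqr.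
move=> s t t' ts t's.
have /eqP := psumr_eq0P (fun s _ => gap_ge0 s) gaps0 isT (i := s).
rewrite subr_eq0 => /eqP /cauchy_schwarz_gap_eq0 /(_ t t' ts t's).
by rewrite /a /inc ts t's.
Qed.

Definition esign (x y : T0) : R := (sgnG n K eps d x y)%:~R.

Lemma esign_sqr x y : esign x y * esign x y = 1.
Proof. by rewrite /esign /sgnG rmorphN rmorphM /= mulrNN mulrACA !bsign_sqr mulr1. Qed.

(* [u] is compatible with the signed graph when [u y = - esign x y * u x]
   along every edge: switching by the signs of [u] makes the edges negative. *)
Definition edge_compatible (u : T0 -> R) : Prop :=
  forall x y, adj x y -> u y = - esign x y * u x.

Lemma edge_compatible_ext u u' : u =1 u' -> edge_compatible u -> edge_compatible u'.
Proof. by move=> uu' ec x y xy; rewrite -!uu'; apply: ec. Qed.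

Lemma esign_facets (x y : T0) (s : T1) : x != y ->
  val x \subset val s -> val y \subset val s ->
  esign x y = - (bsign x (val s) * bsign y (val s)).
Proof.
move=> nxy xs ys; rewrite /esign /sgnG (union_facets nxy xs ys).
by rewrite rmorphN rmorphM.
Qed.

Lemma facet_constantE u : facet_constant u <-> edge_compatible u.
Proof.
split=> [fc x y /andP [nxy /existsP [s /andP [xs ys]]] | ec s t t' ts t's].
  rewrite (esign_facets nxy xs ys) opprK.
  by rewrite [bsign x _ * _]mulrC -mulrA (fc s x y xs ys) mulrA bsign_sqr mul1r.
have [<-|ntt] := eqVneq t t'; first by [].
have tt' : adj t t' by rewrite /adjG ntt; apply/existsP; exists s; rewrite ts t's.
rewrite (ec _ _ tt') (esign_facets ntt ts t's) opprK.
by rewrite -[LHS]mul1r -(bsign_sqr t' (val s)); ring.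
Qed.

Definition antibalancing (C : {set T0}) (f : {ffun T0 -> bool}) : bool :=
  [forall x, forall y, ((x \in C) && (y \in C) && adj x y) ==>
      ((-1) ^+ f x * sgnG n K eps d x y * (-1) ^+ f y == -1)].

Lemma antibalancingP (C : {set T0}) (f : {ffun T0 -> bool}) :
  reflect (forall x y, x \in C -> y \in C -> adj x y ->
             swsign (f x) * esign x y * swsign (f y) = -1)
          (antibalancing C f).
Proof.
apply: (iffP forallP) => [fC x y xC yC xy | fC x].
  move: (fC x) => /forallP /(_ y); rewrite xC yC xy => /eqP.
  move=> /(congr1 (fun z : int => z%:~R : R)).
  by rewrite !rmorphM /= !rmorphXn /= rmorphN1.
apply/forallP => y; apply/implyP => /andP [/andP [xC yC] xy]; apply/eqP/(@intr_inj R).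
by rewrite !rmorphM /= !rmorphXn /= rmorphN1; apply: fC.
Qed.

Definition switching (C : {set T0}) : {ffun T0 -> bool} :=
  odflt [ffun => false] [pick f | antibalancing C f].

Lemma switchingP (C : {set T0}) :
  antibalanced n K eps d C -> antibalancing C (switching C).
Proof.
move=> /existsP [f0 f0C]; have {}f0C : antibalancing C f0 := f0C.
by rewrite /switching; case: pickP => [f // | /(_ f0)]; rewrite f0C.
Qed.

Definition switch_cochain (C : {set T0}) (t : T0) : R :=
  if t \in C then swsign (switching C t) else 0.

Lemma switch_cochain_out (C : {set T0}) t : t \notin C -> switch_cochain C t = 0.
Proof. by rewrite /switch_cochain => /negbTE ->. Qed.

(* For an antibalanced component, [switch_cochain C] is compatible: inside [C]
   this is the antibalancing condition, and no edge leaves [C]. *)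
Lemma switch_cochain_compatible (C : {set T0}) : C \in components n K d ->
  antibalanced n K eps d C -> edge_compatible (switch_cochain C).
Proof.
move=> hC abC x y xy; rewrite /switch_cochain.
have [xC|xC] := boolP (x \in C).
  have yC := component_adj hC xC xy; rewrite yC.
  apply: swsign_edge; [|exact: swsign_sqr|exact: esign_sqr].
  exact: (antibalancingP _ _ (switchingP abC)) x y xC yC xy.
have [yC|//] := boolP (y \in C); last by rewrite mulr0.
by move: xC; rewrite (component_adj hC yC _) // adj_sym.
Qed.

Lemma compatible_switch_const u (C : {set T0}) : edge_compatible u ->
  C \in components n K d -> antibalanced n K eps d C ->
  {in C &, forall t t0, u t * swsign (switching C t) = u t0 * swsign (switching C t0)}.
Proof.
move=> ec hC abC t t0 tC t0C; have CE := componentE hC t0C.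
apply: (connect_invariant (w := fun z => u z * swsign (switching C z))); last first.
  by rewrite CE inE in tC.
move=> x y t0x xy; have xC : x \in C by rewrite CE inE.
have yC := component_adj hC xC xy.
move/antibalancingP: (switchingP abC) => /(_ x y xC yC xy) /swsign_edge.
move=> /(_ (swsign_sqr _) (esign_sqr _ _)) ->; rewrite (ec _ _ xy).
transitivity (u x * swsign (switching C x) * (esign x y * esign x y)); first by ring.
by rewrite esign_sqr mulr1.
Qed.

Lemma compatible_sqr_const u (C : {set T0}) : edge_compatible u ->
  C \in components n K d -> {in C &, forall t t0, u t ^+ 2 = u t0 ^+ 2}.
Proof.
move=> ec hC t t0 tC t0C; have CE := componentE hC t0C.
apply: (connect_invariant (w := fun z => u z ^+ 2)); last by rewrite CE inE in tC.
move=> x y _ xy; rewrite (ec _ _ xy).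
transitivity (u x ^+ 2 * (esign x y * esign x y)); first by ring.
by rewrite esign_sqr mulr1.
Qed.

(* A compatible cochain vanishes on components that are not antibalanced:
   otherwise the signs of its values would define an antibalancing switching. *)
Lemma compatible_not_antibalanced u (C : {set T0}) : edge_compatible u ->
  C \in components n K d -> ~~ antibalanced n K eps d C -> {in C, forall t, u t = 0}.
Proof.
move=> ec hC nabC t tC; apply/eqP; apply: contraNT nabC => ut0.
apply/existsP; exists [ffun z => u z != u t]; set f := [ffun z => _].
have uf z : z \in C -> u z = swsign (f z) * u t.
  move=> zC; rewrite /f ffunE /swsign.
  have /eqP := compatible_sqr_const ec hC zC tC.
  rewrite eqf_sqr => /orP [/eqP ->|/eqP ->]; first by rewrite eqxx mul1r.
  case: eqP => [ut|_]; last by rewrite expr1 mulN1r.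
  have ut_0 : u t = 0 by lra.
  by rewrite ut_0 eqxx in ut0.
apply/antibalancingP => x y xC yC xy; have := ec _ _ xy.
rewrite (uf x xC) (uf y yC) mulrA => /(mulIf ut0) ->.
transitivity (- (swsign (f x) * swsign (f x)) * (esign x y * esign x y)); first by ring.
by rewrite swsign_sqr esign_sqr mulr1.
Qed.

End UpLaplacian.

Section Multiplicity.
Variables (R : realFieldType) (n d : nat) (K : {set {set 'I_n}}).
Variable eps : {set 'I_n} -> bool.
Hypothesis hK : simplicial_complex n K.
Hypothesis hdeg : forall t, t \in Sd n K d -> (0 < deg n K d t)%N.

Local Notation T0 := (simp n K d).
Local Notation B := (incid R n K eps d).
Local Notation D := (degmx R n K d).
Local Notation M := (upLap R n K eps d).
Local Notation N0 := #|{: T0}|.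
Local Notation switch_cochain := (switch_cochain R eps).

Let lam : R := (d.+2)%:R.

Definition antibal_comps : {set {set T0}} :=
  [set C in components n K d | antibalanced n K eps d C].

Lemma antibal_compsP C :
  reflect (C \in components n K d /\ antibalanced n K eps d C) (C \in antibal_comps).
Proof. by rewrite inE; apply: andP. Qed.

(* The coefficient of a compatible cochain on a component: its switched value
   at a chosen vertex, which by [compatible_switch_const] does not depend on
   the choice. *)
Definition comp_coef (u : T0 -> R) (C : {set T0}) : R :=
  if [pick z in C] is Some z then u z * swsign (switching eps C z) else 0.

Lemma compatible_decomp u : edge_compatible eps u ->
  forall t, u t = \sum_(C in antibal_comps) comp_coef u C * switch_cochain C t.
Proof.
move=> ec t; have [abt|nabt] := boolP (antibalanced n K eps d (comp_of t)).
  have tAB : comp_of t \in antibal_comps by rewrite inE comp_of_mem abt.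
  rewrite (bigD1 _ tAB) /= big1 ?addr0; last first.
    move=> C /andP [/antibal_compsP [hC _] Ct]; rewrite switch_cochain_out ?mulr0 //.
    by apply: contra Ct => tC; rewrite (componentE hC tC).
  rewrite /comp_coef /switch_cochain comp_of_self.
  case: pickP => [z zC|/(_ t)]; last by rewrite comp_of_self.
  rewrite -(compatible_switch_const ec (comp_of_mem t) abt (comp_of_self t) zC).
  by rewrite -mulrA swsign_sqr mulr1.
rewrite (compatible_not_antibalanced ec (comp_of_mem t) nabt (comp_of_self t)).
rewrite big1 // => C /antibal_compsP [hC abC]; rewrite switch_cochain_out ?mulr0 //.
by apply: contra nabt => tC; rewrite -(componentE hC tC).
Qed.

Definition switch_mx : 'M[R]_(#|antibal_comps|, N0) :=
  \matrix_(c, i) switch_cochain (enum_val c) (enum_val i).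

Lemma cochain_switch_row c :
  cochain (row c switch_mx) =1 switch_cochain (enum_val c).
Proof. by move=> t; rewrite /cochain !mxE enum_rankK. Qed.

Lemma degmx_unit : D \in unitmx.
Proof. by apply: unitmx_diag_pos => i; rewrite mxE ltr0n; apply/hdeg/valP. Qed.

Lemma eigen_upLapE (v : 'rV[R]_N0) :
  v *m M = lam *: v <-> edge_compatible eps (cochain (v *m invmx D)).
Proof.
rewrite -facet_constantE.
have -> : v *m M = lam *: v <->
    (v *m invmx D) *m (B *m B^T) = lam *: (v *m invmx D *m D).
  by rewrite /upLap -(mulmxA v (invmx D) D) (mulVmx degmx_unit) mulmx1 !mulmxA.
rewrite gen_eigen_cochainE.
by split; [apply: gen_eigen_facet_constant | apply: facet_constant_gen_eigen].
Qed.

(* Hence the eigenspace of [M] for [lam] is spanned by the rows of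
   [switch_mx *m D]: they are eigenvectors, and every eigenvector decomposes
   along them by [compatible_decomp]. *)
Lemma eigenspace_switch_mx : (eigenspace M lam == switch_mx *m D)%MS.
Proof.
apply/andP; split; apply/row_subP => i.
  set v := row i _; have /eigenspaceP/eigen_upLapE ec : (v <= eigenspace M lam)%MS.
    exact: row_sub.
  rewrite -[v](mulmxKV degmx_unit); apply: submxMr; apply/submxP.
  exists (\row_c comp_coef (cochain (v *m invmx D)) (enum_val c)).
  apply/rowP => k; rewrite cochainE (compatible_decomp ec) mxE.
  by rewrite big_enum_val; apply: eq_bigr => c _; rewrite !mxE.
rewrite row_mul; apply/eigenspaceP/eigen_upLapE.
rewrite mulmxK ?degmx_unit //.
have /antibal_compsP [hC abC] := enum_valP i.
apply: edge_compatible_ext (switch_cochain_compatible R hC abC).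
by move=> t; rewrite cochain_switch_row.
Qed.

(* The switching cochains of distinct components have disjoint supports and
   do not vanish on their own component, hence are linearly independent. *)
Lemma switch_mx_free : row_free switch_mx.
Proof.
rewrite -kermx_eq0 -submx0; apply/row_subP => i; set a := row i (kermx switch_mx).
have aX : a *m switch_mx = 0 by apply/sub_kermxP; apply: row_sub.
suff -> : a = 0 by rewrite sub0mx.
apply/rowP => c; rewrite mxE; have /antibal_compsP [hC _] := enum_valP c.
have [t0 _ Ct0] := imsetP hC; have t0C : t0 \in enum_val c by rewrite Ct0 comp_of_self.
have := congr1 (fun y : 'rV[R]_N0 => y 0 (enum_rank t0)) aX.
rewrite /= !mxE (bigD1 c) //= big1 ?addr0; last first.
  move=> c' c'c; rewrite !mxE enum_rankK switch_cochain_out ?mulr0 //.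
  apply: contra c'c => t0C'; have /antibal_compsP [hC' _] := enum_valP c'.
  by apply/eqP/enum_val_inj; rewrite (componentE hC' t0C') (componentE hC t0C).
rewrite !mxE enum_rankK /switch_cochain t0C => /eqP; rewrite mulf_eq0 => /orP [/eqP //|].
by rewrite /swsign signr_eq0.
Qed.

Lemma rank_eigenspace_upLap : \rank (eigenspace M lam) = #|antibal_comps|.
Proof.
rewrite (eqmx_rank eigenspace_switch_mx) mxrankMfree ?row_free_unit ?degmx_unit //.
exact/eqP/switch_mx_free.
Qed.

(* [M] is semisimple at [lam], being self-adjoint for the [D]-inner product. *)
Lemma upLap_semisimple : semisimple_at M lam.
Proof.
rewrite /upLap -mulmxA; apply: semisimple_diag_sym; first by rewrite trmx_mul trmxK.
by move=> i; rewrite mxE ltr0n; apply/hdeg/valP.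
Qed.

End Multiplicity.

Theorem mainTheorem3 (R : realFieldType) (n d : nat) (K : {set {set 'I_n}})
    (eps : {set 'I_n} -> bool) :
  simplicial_complex n K ->
  (forall t, t \in Sd n K d -> (0 < deg n K d t)%N) ->
  (eigenvalue (upLap R n K eps d) (d.+2)%:R <->
     exists2 C, C \in components n K d & antibalanced n K eps d C) /\
  mup (d.+2)%:R (char_poly (upLap R n K eps d)) = n_antibalanced n K eps d.
Proof.
move=> hK hdeg; have rank_eig := rank_eigenspace_upLap R eps hK hdeg.
split; last by rewrite mup_char_poly_eigenspace ?rank_eig //; apply: upLap_semisimple.
rewrite /eigenvalue -mxrank_eq0 rank_eig -lt0n card_gt0.
split=> [/set0Pn [C /antibal_compsP [hC abC]] | [C hC abC]]; first by exists C.
by apply/set0Pn; exists C; apply/antibal_compsP.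
Qed.
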